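(* Let $(W,S)$ be a finitely generated Coxeter system and $u,v\in W$. (1) If $u\le v$, then $C(v)\subseteq C(u)$ (equivalently $S(u)\subseteq S(v)$). (2) If $u\le v$, then $[u,v]=\{v_I: S(u)\subseteq I\subseteq S(v)\}$. (3) If $u\le v$, then $u\le_{\mathcal L} v$. (4) If $W_{S(u)}$ has finite index $k$ in $W$, then $|\{w\in W: w\ge u\}|=k$.
   Context: $(W,S)$ is a finitely generated Coxeter system with length function $\ell$. For $w\in W$, $S(w)\subseteq S$ is the set of simple reflections appearing in a (any) reduced expression of $w$, and $C(w)=S\setminus S(w)$. For $I\subseteq S$, $W_I$ is the parabolic subgroup generated by $I$, $X_I=\{u\in W:\ell(us)>\ell(u)\ \forall s\in I\}$, and every $w\in W$ factors uniquely as $w=w^Iw_I$ with $w^I\in X_I$, $w_I\in W_I$ (parabolic components along $I$), with $\ell(w)=\ell(w^I)+\ell(w_I)$. The partial order on $W$: $u\le v$ if and only if $v_{S(u)}=u$. The left weak order: $u\le_{\mathcal L}v$ iff there is $v'\in W$ with $v=v'u$ and $\ell(v)=\ell(v')+\ell(u)$. *)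

From HB Require Import structures.
From mathcomp Require Import all_boot.
From Stdlib Require Import ClassicalEpsilon.

Set Implicit Arguments.
Unset Strict Implicit.
Unset Printing Implicit Defensive.

Local Open Scope group_scope.

Section Coxeter.

(* W : a group; the set S of simple reflections is the (finite) image of the
   map  s : I -> W  indexed by a finite type I (s will be injective). *)
Variables (W : groupType) (I : finType) (s : I -> W).

Definition wval (t : seq I) : W := foldr (fun i w => s i * w) 1 t.

(* (W,S) is a Coxeter system: S = s(I) is a finite set of involutions
   (distinct, different from 1) generating W, and W has the presentation
   < S | (st)^{m(s,t)} = 1 >, m(s,t) the order of st, expressed by the
   universal property of the presentation: every map f of S into a group G
   satisfying the relations of W between the products st extends to a
   homomorphism W -> G. *)
Definition coxeter_system : Prop :=
  [/\ injective s,
      forall i, s i != 1,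
      forall i, s i * s i = 1,
      forall w : W, exists t : seq I, wval t = w
    & forall (G : groupType) (f : I -> G),
        (forall i j n, (s i * s j) ^+ n = 1 -> (f i * f j) ^+ n = 1) ->
        exists phi : W -> G,
          (forall x y, phi (x * y) = phi x * phi y) /\
          (forall i, phi (s i) = f i)].

Definition len (w : W) : nat :=
  epsilon (inhabits 0%N)
    (fun n => (exists t, size t = n /\ wval t = w) /\
              (forall t, wval t = w -> (n <= size t)%N)).

Definition pbool (P : Prop) : bool :=
  if excluded_middle_informative P then true else false.

Definition supp (w : W) : {set I} :=
  [set i | pbool (exists t, wval t = w /\ size t = len w /\ i \in t)].

Definition csupp (w : W) : {set I} := ~: supp w.

Definition inPar (J : {set I}) (w : W) : Prop :=
  exists t : seq I, (forall i, i \in t -> i \in J) /\ wval t = w.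

Definition inX (J : {set I}) (u : W) : Prop :=
  forall i, i \in J -> (len u < len (u * s i))%N.

Definition parcomp (J : {set I}) (w : W) : W :=
  epsilon (inhabits (1 : W))
    (fun b => exists a, [/\ inX J a, inPar J b & w = a * b]).

Definition cox_le (u v : W) : Prop := parcomp (supp u) v = u.

Definition leftweak (u v : W) : Prop :=
  exists v', v = v' * u /\ len v = (len v' + len u)%N.

Definition par_index (J : {set I}) (k : nat) : Prop :=
  exists r : 'I_k -> W,
    (forall a b, inPar J ((r a)^-1 * r b) -> a = b) /\
    (forall w, exists a, inPar J ((r a)^-1 * w)).

Definition upset_card (u : W) (k : nat) : Prop :=
  exists g : 'I_k -> W, injective g /\
    (forall w, cox_le u w <-> exists a, g a = w).

End Coxeter.

(* For a word i_1 ... i_n let t_k be the reflection s_{i_1} ... s_{i_{k-1}} s_{i_k} s_{i_{k-1}} ... s_{i_1}.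
   The Coxeter presentation lifts s_i to (s_i, {s_i}) in the semidirect product of W with the parity
   functions W -> bool (W acting by conjugation), so the parity of the number of occurrences of any t
   among t_1, ..., t_n depends only on the element w represented by the word. For a reduced word the t_k
   are distinct, which gives the strong exchange condition, hence the deletion condition and the theory
   of minimal coset representatives: w = w^J w_J uniquely, with lengths adding. The four statements are
   then computations with parabolic components: u <= v makes v = v^{S(u)} u length additive, J <= K gives
   (v_K)_J = v_J, and w >= u exactly when w = x u for x the minimal representative of w W_{S(u)}. *)
From HB Require Import structures.
From mathcomp Require Import all_boot.
From mathcomp Require boolp.
From mathcomp Require Import zify.
From Stdlib Require Import ClassicalEpsilon.

Set Implicit Arguments.
Unset Strict Implicit.
Unset Printing Implicit Defensive.

Local Open Scope group_scope.

Definition refl_ext (W : groupType) := (W * (W -> bool))%type.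
HB.instance Definition _ (W : groupType) := boolp.gen_eqMixin (refl_ext W).
HB.instance Definition _ (W : groupType) := boolp.gen_choiceMixin (refl_ext W).

Section ReflExt.
Variable W : groupType.

Definition rext_mul (x y : refl_ext W) : refl_ext W :=
  (x.1 * y.1, fun z => x.2 z (+) y.2 (z ^ x.1)).
Definition rext_one : refl_ext W := (1, fun _ => false).
Definition rext_inv (x : refl_ext W) : refl_ext W :=
  (x.1^-1, fun z => x.2 (z ^ x.1^-1)).

Lemma rext_mulA : associative rext_mul.
Proof.
move=> [a A] [b B] [c C]; congr pair; first by rewrite /= mulgA.
by apply: boolp.funext => z /=; rewrite addbA conjgM.
Qed.

Lemma rext_mul1g : left_id rext_one rext_mul.
Proof.
move=> [a A]; congr pair; first by rewrite /= mul1g.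
by apply: boolp.funext => z /=; rewrite conjg1.
Qed.

Lemma rext_mulg1 : right_id rext_one rext_mul.
Proof.
move=> [a A]; congr pair; first by rewrite /= mulg1.
by apply: boolp.funext => z /=; rewrite addbF.
Qed.

Lemma rext_mulVg : left_inverse rext_one rext_inv rext_mul.
Proof.
move=> [a A]; congr pair; first by rewrite /= mulVg.
by apply: boolp.funext => z /=; rewrite addbb.
Qed.

Lemma rext_mulgV : right_inverse rext_one rext_inv rext_mul.
Proof.
move=> [a A]; congr pair; first by rewrite /= mulgV.
by apply: boolp.funext => z /=; rewrite conjgK addbb.
Qed.

End ReflExt.

HB.instance Definition _ (W : groupType) :=
  isGroup.Build (refl_ext W) (@rext_mulA W) (@rext_mul1g W) (@rext_mulg1 W)
    (@rext_mulVg W) (@rext_mulgV W).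

Lemma cat_eq_cat_cons (T : Type) (a b c d : seq T) (k : T) : a ++ b = c ++ k :: d ->
  (exists u, a = c ++ k :: u /\ d = u ++ b) \/ (exists u, c = a ++ u /\ b = u ++ k :: d).
Proof.
elim: a c => [|x a IH] [|y c] //= E.
- by right; exists [::]; rewrite E.
- by right; exists (y :: c); rewrite E.
- by case: E => -> <-; left; exists a.
case: E => -> /IH [[u [-> ->]] | [u [-> ->]]]; first by left; exists u.
by right; exists u.
Qed.

Lemma odd_count_memP (T : eqType) (L : seq T) x : odd (count_mem x L) -> x \in L.
Proof. by move=> H; rewrite -has_pred1 has_count; case: (count _ _) H. Qed.

Lemma odd_count_mem_uniq (T : eqType) (L : seq T) x :
  uniq L -> odd (count_mem x L) = (x \in L).
Proof. by move=> U; rewrite count_uniq_mem //; case: (x \in L). Qed.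

Lemma pboolP (P : Prop) : pbool P <-> P.
Proof. by rewrite /pbool; case: excluded_middle_informative. Qed.

Section Coxeter.
Variables (W : groupType) (I : finType) (s : I -> W).
Hypothesis HW : coxeter_system s.

Local Notation wv := (wval s).
Local Notation len := (len s).

Definition reduced (t : seq I) := size t = len (wv t).

Lemma mulss i : s i * s i = 1.
Proof. by case: HW. Qed.

Lemma s_inj : injective s.
Proof. by case: HW. Qed.

Lemma invs i : (s i)^-1 = s i.
Proof. by apply: mulg1_eq; rewrite mulss. Qed.

Lemma conjssK i y : (y ^ s i) ^ s i = y.
Proof. by rewrite -conjgM mulss conjg1. Qed.

Lemma wval_cat t1 t2 : wv (t1 ++ t2) = wv t1 * wv t2.
Proof. by elim: t1 => [|i t IH] /=; rewrite ?mul1g // IH mulgA. Qed.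

Lemma wval_rcons t i : wv (rcons t i) = wv t * s i.
Proof. by rewrite -cats1 wval_cat /= mulg1. Qed.

Lemma wval_rev t : wv (rev t) = (wv t)^-1.
Proof.
elim: t => [|i t IH] /=; first by rewrite invg1.
by rewrite rev_cons wval_rcons IH invgM invs.
Qed.

Lemma lenP w : (exists t, size t = len w /\ wv t = w) /\
  (forall t, wv t = w -> len w <= size t).
Proof.
apply: (@epsilon_spec nat (inhabits 0%N) (fun n => (exists t, size t = n /\ wv t = w) /\
  (forall t, wv t = w -> n <= size t))).
have ex_size : exists n, pbool (exists t, size t = n /\ wv t = w).
  by case: HW => _ _ _ /(_ w) [t <-] _; exists (size t); apply/pboolP; exists t.
case: (ex_minnP ex_size) => n /pboolP [t [Ht Hw]] Hmin; exists n; split; first by exists t.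
by move=> t' Ht'; apply: Hmin; apply/pboolP; exists t'.
Qed.

Lemma len_wval t : len (wv t) <= size t.
Proof. by case: (lenP (wv t)) => _; apply. Qed.

Lemma reduced_wordP w : exists t, reduced t /\ wv t = w.
Proof. by case: (lenP w) => -[t [St Et]] _; exists t; rewrite /reduced Et. Qed.

Lemma len1 : len 1 = 0.
Proof. by have := len_wval [::]; rewrite leqn0 => /eqP. Qed.

Lemma len_eq0 w : len w = 0 -> w = 1.
Proof. by case: (reduced_wordP w) => -[|i t] [Ht <-] //; rewrite -Ht. Qed.

Lemma lenV w : len w^-1 = len w.
Proof.
suff len_le x : len x^-1 <= len x.
  by apply/eqP; rewrite eqn_leq len_le /=; have := len_le w^-1; rewrite invgK.
case: (reduced_wordP x) => t [red_t <-].
by rewrite -wval_rev -red_t -(size_rev t) len_wval.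
Qed.

Lemma len_mul x y : len (x * y) <= len x + len y.
Proof.
case: (reduced_wordP x) => t1 [red_t1 <-]; case: (reduced_wordP y) => t2 [red_t2 <-].
by rewrite -wval_cat -red_t1 -red_t2 -size_cat len_wval.
Qed.

Lemma lens i : len (s i) = 1%N.
Proof.
apply/eqP; rewrite eqn_leq; apply/andP; split.
  by have := len_wval [:: i]; rewrite /= mulg1.
rewrite lt0n; apply/negP => /eqP /len_eq0 si1.
by case: HW => _ /(_ i); rewrite si1 eqxx.
Qed.

Lemma len_mulsL_le i w : len (s i * w) <= (len w).+1.
Proof. by apply: leq_trans (len_mul _ _) _; rewrite lens. Qed.

Lemma len_mulsL_ge i w : len w <= (len (s i * w)).+1.
Proof. by rewrite -{1}(mul1g w) -(mulss i) -mulgA len_mulsL_le. Qed.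

Lemma reduced_cat t1 t2 : reduced (t1 ++ t2) -> reduced t1 /\ reduced t2.
Proof.
rewrite /reduced wval_cat size_cat => E.
have := len_mul (wv t1) (wv t2); have := len_wval t1; have := len_wval t2.
lia.
Qed.

Fixpoint refl_seq (t : seq I) : seq W :=
  if t is i :: t' then s i :: map (fun y => y ^ s i) (refl_seq t') else [::].

Lemma size_refl_seq t : size (refl_seq t) = size t.
Proof. by elim: t => //= i t IH; rewrite size_map IH. Qed.

Definition rext_gen i : refl_ext W := (s i, fun x => x == s i).

Definition rext_wval (t : seq I) : refl_ext W := foldr (fun i g => rext_gen i * g) 1 t.

Lemma count_mem_conjs i x L :
  count_mem x (map (fun y => y ^ s i) L) = count_mem (x ^ s i) L.
Proof.
rewrite count_map; apply: eq_count => y /=.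
by rewrite -(inj_eq (@conjg_inj _ (s i))) conjssK.
Qed.

Lemma rext_wvalE t : rext_wval t = (wv t, fun x => odd (count_mem x (refl_seq t))).
Proof.
elim: t => [|i t IH] //=.
change (rext_mul (rext_gen i) (rext_wval t) = (s i * wv t,
   fun x => odd (count_mem x (s i :: map (fun y => y ^ s i) (refl_seq t))))).
rewrite IH; congr pair; apply: boolp.funext => z /=.
by rewrite oddD count_mem_conjs eq_sym; case: (s i == z).
Qed.

Definition alt_word (i j : I) n := flatten (nseq n [:: i; j]).

Lemma rext_wval_alt i j n : (rext_gen i * rext_gen j) ^+ n = rext_wval (alt_word i j n).
Proof. by elim: n => [|n IH] //; rewrite expgS IH /= mulgA. Qed.

Lemma wval_alt i j n : wv (alt_word i j n) = (s i * s j) ^+ n.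
Proof. by elim: n => [|n IH] //; rewrite expgS -IH /= mulgA. Qed.

Lemma refl_seq_alt i j n :
  refl_seq (alt_word i j n) = [seq (s i * s j) ^+ m * s i | m <- iota 0 n.*2].
Proof.
elim: n => [|n IH] //; rewrite doubleS /= IH.
set x := s i * s j.
have xV : x^-1 = s j * s i by rewrite /x invgM !invs.
have conj_ij y : (y ^ s j) ^ s i = x * y * x^-1.
  by rewrite -conjgM -xV conjgE invgK mulgA.
have si_xV : s i * x^-1 = x * s i by rewrite xV /x !mulgA.
congr [:: _, _ & _]; first by rewrite expg0 mul1g.
  by rewrite expg1 conjgE invs /x mulgA.
rewrite -(addn0 2) iotaDl -!map_comp; apply: eq_map => m /=.
by clearbody x; rewrite conj_ij add2n expgS expgSr -!mulgA si_xV !mulgA.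
Qed.

(* The reflections crossed by a relator word come in equal pairs m, m + n. *)
Lemma odd_count_refl_seq_alt i j n x :
  (s i * s j) ^+ n = 1 -> odd (count_mem x (refl_seq (alt_word i j n))) = false.
Proof.
move=> rel; rewrite refl_seq_alt -addnn iotaD /= map_cat.
have -> : [seq (s i * s j) ^+ m * s i | m <- iota n n] =
          [seq (s i * s j) ^+ m * s i | m <- iota 0 n].
  rewrite -{1}(addn0 n) iotaDl -map_comp; apply: eq_map => m /=.
  by rewrite expgnDr rel mul1g.
by rewrite count_cat addnn odd_double.
Qed.

Lemma rext_gen_rel i j n : (s i * s j) ^+ n = 1 -> (rext_gen i * rext_gen j) ^+ n = 1.
Proof.
move=> rel; rewrite rext_wval_alt rext_wvalE wval_alt rel.
change (((1 : W), fun x => odd (count_mem x (refl_seq (alt_word i j n)))) = rext_one W).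
by congr pair; apply: boolp.funext => x; rewrite odd_count_refl_seq_alt.
Qed.

Lemma odd_count_refl_seq t1 t2 x : wv t1 = wv t2 ->
  odd (count_mem x (refl_seq t1)) = odd (count_mem x (refl_seq t2)).
Proof.
case: HW => _ _ _ _ /(_ _ rext_gen rext_gen_rel) [phi [phiM phis]] E.
have phi1 : phi 1 = 1 by apply: (@mulgI _ (phi 1)); rewrite -phiM !mulg1.
have phi_wval t : phi (wv t) = rext_wval t.
  by elim: t => [|i t IH] //=; rewrite phiM phis IH.
by have := phi_wval t1; rewrite E phi_wval !rext_wvalE => /(congr1 (fun g => g.2 x)).
Qed.

Lemma refl_seq_exchange t x : x \in refl_seq t ->
  exists t1 j t2, t = t1 ++ j :: t2 /\ x * wv t = wv (t1 ++ t2).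
Proof.
elim: t x => [|i t IH] x //=; rewrite inE => /orP [/eqP -> | /mapP [y ty ->]].
  by exists [::], i, t; split => //=; rewrite mulgA mulss mul1g.
case: (IH y ty) => t1 [j [t2 [-> E]]]; exists (i :: t1), j, t2; split => //=.
by rewrite -E conjgE invs -!mulgA; congr (_ * (_ * _)); rewrite mulgA mulss mul1g.
Qed.

Lemma conjs_eqs i y : y ^ s i = s i -> y = s i.
Proof. by move=> E; rewrite -(conjssK i y) E conjgE invs mulgA mulss mul1g. Qed.

Lemma uniq_refl_seq t : reduced t -> uniq (refl_seq t).
Proof.
elim: t => //= i t IH red_it.
have [_ red_t] := @reduced_cat [:: i] t red_it.
rewrite (map_inj_uniq (@conjg_inj _ (s i))) IH // andbT.
apply/negP => /mapP [y ty /esym/conjs_eqs y_si]; rewrite y_si in ty.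
case: (refl_seq_exchange ty) => t1 [j [t2 [Et E]]].
have := len_wval (t1 ++ t2); rewrite -E -red_it Et /= !size_cat /=; lia.
Qed.

(* The reflections of i :: t are distinct, so each occurs an odd number of times in any word t'
   for s_i w and hence is a reflection of t'. *)
Lemma len_mulsL_gt i t : reduced t -> s i \notin refl_seq t ->
  len (wv t) < len (s i * wv t).
Proof.
move=> red_t si_t; case: (reduced_wordP (s i * wv t)) => t' [red_t' Et'].
have uniq_it : uniq (refl_seq (i :: t)).
  rewrite /= (map_inj_uniq (@conjg_inj _ (s i))) uniq_refl_seq // andbT.
  by apply/negP => /mapP [y ty /esym/conjs_eqs y_si]; rewrite -y_si ty in si_t.
have sub : {subset refl_seq (i :: t) <= refl_seq t'}.
  move=> x x_it; apply: odd_count_memP.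
  by rewrite -(@odd_count_refl_seq (i :: t)) ?Et' // odd_count_mem_uniq.
by have := uniq_leq_size uniq_it sub; rewrite !size_refl_seq /= red_t' Et' -red_t.
Qed.

Lemma len_mulsL i w : len (s i * w) = (len w).+1 \/ len w = (len (s i * w)).+1.
Proof.
case: (reduced_wordP w) => t [red_t <-].
have := len_mulsL_le i (wv t); have := len_mulsL_ge i (wv t).
case: (boolP (s i \in refl_seq t)) => si_t; last by have := len_mulsL_gt red_t si_t; lia.
case: (refl_seq_exchange si_t) => t1 [j [t2 [Et ->]]].
have := len_wval (t1 ++ t2); move: red_t; rewrite /reduced {1}Et !size_cat /=; lia.
Qed.

Lemma len_mulsR i w : len (w * s i) = (len w).+1 \/ len w = (len (w * s i)).+1.
Proof. by have := len_mulsL i w^-1; rewrite -invs -invgM invs !lenV. Qed.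

Lemma deletion_mulsL i w t : len (s i * w) < len w -> wv t = w ->
  exists t1 j t2, t = t1 ++ j :: t2 /\ s i * w = wv (t1 ++ t2).
Proof.
move=> len_lt Et; subst w; case: (reduced_wordP (wv t)) => t0 [red_t0 Et0].
have si_t0 : s i \in refl_seq t0.
  by apply/negPn/negP => /(len_mulsL_gt red_t0); rewrite Et0; lia.
have : odd (count_mem (s i) (refl_seq t)).
  by rewrite (@odd_count_refl_seq t t0) // odd_count_mem_uniq // uniq_refl_seq.
by move/odd_count_memP/refl_seq_exchange.
Qed.

Lemma deletion_mulsR i w t : len (w * s i) < len w -> wv t = w ->
  exists t1 j t2, t = t1 ++ j :: t2 /\ w * s i = wv (t1 ++ t2).
Proof.
move=> len_lt Et.
have len_lt' : len (s i * w^-1) < len w^-1 by rewrite -invs -invgM !lenV.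
have Et' : wv (rev t) = w^-1 by rewrite wval_rev Et.
case: (deletion_mulsL len_lt' Et') => t1 [j [t2 [Erev E]]].
exists (rev t2), j, (rev t1); split.
  by rewrite -(revK t) Erev rev_cat rev_cons cat_rcons.
by rewrite -(invgK (w * s i)) invgM invs E -rev_cat wval_rev.
Qed.

Lemma reduced_subseq t : exists t', [/\ subseq t' t, wv t' = wv t & reduced t'].
Proof.
elim/last_ind: t => [|t i [t' [sub Et' red_t']]]; first by exists [::]; rewrite /reduced /= len1.
case: (len_mulsR i (wv t')) => len_ti.
  exists (rcons t' i); split; first by rewrite -!cats1 cat_subseq.
    by rewrite !wval_rcons Et'.
  by rewrite /reduced size_rcons wval_rcons len_ti red_t'.
have len_lt : len (wv t' * s i) < len (wv t') by rewrite len_ti.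
case: (deletion_mulsR len_lt (erefl _)) => t1 [j [t2 [Et E]]].
exists (t1 ++ t2); split.
- apply: subseq_trans (subseq_rcons t i); apply: subseq_trans sub.
  by rewrite Et; apply: cat_subseq => //; apply: subseq_cons.
- by rewrite wval_rcons -E Et'.
- move: red_t' len_ti; rewrite /reduced -E Et !size_cat /=; lia.
Qed.

Section Parabolic.
Variable J : {set I}.
Local Notation inP := (inPar s J).

Lemma inPar1 : inP 1.
Proof. by exists [::]. Qed.

Lemma inParM x y : inP x -> inP y -> inP (x * y).
Proof.
case=> t1 [H1 <-] [t2 [H2 <-]]; exists (t1 ++ t2); split; last exact: wval_cat.
by move=> i; rewrite mem_cat => /orP [/H1|/H2].
Qed.

Lemma inParV x : inP x -> inP x^-1.
Proof.
case=> t [H <-]; exists (rev t); split; last exact: wval_rev.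
by move=> i; rewrite mem_rev => /H.
Qed.

Lemma inPar_s j : j \in J -> inP (s j).
Proof. by move=> Jj; exists [:: j]; rewrite /= mulg1; split=> // i; rewrite inE => /eqP ->. Qed.

Lemma inPar_reduced w : inP w -> exists t,
  [/\ forall i, i \in t -> i \in J, wv t = w & reduced t].
Proof.
case=> t [tJ <-]; case: (reduced_subseq t) => t' [sub Et' red_t'].
by exists t'; split => // i /(mem_subseq sub) /tJ.
Qed.

Lemma inPar_sP i : inP (s i) -> i \in J.
Proof.
case/inPar_reduced => t [tJ Et]; rewrite /reduced Et lens.
case: t tJ Et => [|j [|]] // tJ; rewrite /= mulg1 => /s_inj <- _.
by apply: tJ; rewrite inE.
Qed.

(* s_i shortens s_i (wval t), so deleting a letter from a word of it in W_J puts wval t, hence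
   s_i, in W_J. *)
Lemma reduced_inPar_letters t : inP (wv t) -> reduced t -> forall i, i \in t -> i \in J.
Proof.
elim: t => //= i t IH [tJ [tJJ EJ]] red_it k.
have [_ red_t] := @reduced_cat [:: i] t red_it.
have Esi : s i * (s i * wv t) = wv t by rewrite mulgA mulss mul1g.
have len_lt : len (s i * (s i * wv t)) < len (s i * wv t) by rewrite Esi -red_t -red_it.
case: (deletion_mulsL len_lt EJ) => t1 [j [t2 [Et E]]].
have inP_t : inP (wv t).
  rewrite -Esi E; exists (t1 ++ t2); split => // m; rewrite mem_cat => tm; apply: tJJ.
  by rewrite Et mem_cat inE; case/orP: tm => ->; rewrite ?orbT.
have Ji : i \in J.
  apply: inPar_sP; rewrite -[s i](mulgK (wv t)).
  by apply: inParM; [exists tJ | apply: inParV].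
by rewrite inE => /orP [/eqP -> //|]; apply: IH.
Qed.

End Parabolic.

Lemma supp_reduced t : reduced t -> supp s (wv t) = [set i | i \in t].
Proof.
move=> red_t; apply/setP => i; rewrite !inE; apply/idP/idP; last first.
  by move=> ti; apply/pboolP; exists t.
move/pboolP => [t' [Et' [red_t' t'i]]].
have := @reduced_inPar_letters [set i | i \in t] t' _ _ i t'i; rewrite inE; apply.
  by rewrite Et'; exists t; split => // m; rewrite inE.
by rewrite /reduced Et'.
Qed.

Lemma inPar_suppE J w : inPar s J w <-> supp s w \subset J.
Proof.
case: (reduced_wordP w) => t [red_t <-]; rewrite supp_reduced //; split.
  by move=> Jt; apply/subsetP => i; rewrite inE; apply: reduced_inPar_letters.
by move/subsetP => tJ; exists t; split => // i ti; apply: tJ; rewrite inE.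
Qed.

Lemma inPar_supp w : inPar s (supp s w) w.
Proof. exact/inPar_suppE. Qed.

Lemma inPar_subset (J K : {set I}) w : J \subset K -> inPar s J w -> inPar s K w.
Proof. by move=> /subsetP JK [t [tJ E]]; exists t; split => // i /tJ /JK. Qed.

Lemma supp_mul_len_add x y : len (x * y) = len x + len y ->
  supp s x \subset supp s (x * y) /\ supp s y \subset supp s (x * y).
Proof.
case: (reduced_wordP x) => tx [red_x <-]; case: (reduced_wordP y) => ty [red_y <-] E.
have red_xy : reduced (tx ++ ty) by rewrite /reduced wval_cat E size_cat red_x red_y.
rewrite -wval_cat !supp_reduced //.
by split; apply/subsetP => i; rewrite !inE mem_cat => ->; rewrite ?orbT.
Qed.

Definition coset_min J a := forall c, inPar s J c -> len a <= len (a * c).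

(* A descent of a b s_j deletes a letter from a reduced word of a or of b: the first contradicts the
   minimality of a (against b s_j b^-1 in W_J), the second the hypothesis on b s_j. *)
Lemma len_coset_min_mulsR J a b j : coset_min J a -> inPar s J b -> j \in J ->
  len (b * s j) = (len b).+1 -> len (a * b * s j) = (len (a * b)).+1.
Proof.
move=> min_a Jb Jj len_bj; case: (len_mulsR j (a * b)) => // len_abj; exfalso.
have len_lt : len (a * b * s j) < len (a * b) by rewrite len_abj.
case: (reduced_wordP a) => ta [red_a Ea]; case: (reduced_wordP b) => tb [red_b Eb].
have Eab : wv (ta ++ tb) = a * b by rewrite wval_cat Ea Eb.
case: (deletion_mulsR len_lt Eab) => t1 [k [t2 [Et E]]].
case: (cat_eq_cat_cons Et) => [[u [Eta Et2]] | [u [Et1 Etb]]].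
  have J_bjb : inPar s J (b * s j * b^-1) by do ![apply: inParM | apply: inParV | apply: inPar_s].
  have := min_a _ J_bjb; rewrite !mulgA E Et2 catA wval_cat -Eb mulgK.
  by have := len_wval (t1 ++ u); move: red_a; rewrite /reduced Ea Eta !size_cat /=; lia.
have Ebj : b * s j = wv (u ++ t2) by apply: (@mulgI _ a); rewrite mulgA E Et1 -catA wval_cat Ea.
by have := len_wval (u ++ t2); rewrite -Ebj len_bj -Eb -red_b Etb !size_cat /=; lia.
Qed.

Lemma len_mul_coset_min J a b : coset_min J a -> inPar s J b -> len (a * b) = len a + len b.
Proof.
move=> min_a /inPar_reduced [t [tJ <- red_t]].
elim/last_ind: t tJ red_t => [|t j IH] tJ red_t; first by rewrite mulg1 len1 addn0.
have tJ' i : i \in t -> i \in J by move=> ti; apply: tJ; rewrite mem_rcons inE ti orbT.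
have red_t' : reduced t by case: (@reduced_cat t [:: j]); rewrite ?cats1.
have len_tj : len (wv t * s j) = (len (wv t)).+1.
  by rewrite -wval_rcons -red_t size_rcons red_t'.
rewrite wval_rcons mulgA (len_coset_min_mulsR min_a _ _ len_tj).
- by rewrite IH // len_tj addnS.
- by exists t.
- by apply: tJ; rewrite mem_rcons mem_head.
Qed.

Lemma coset_min_exists J w : exists a, coset_min J a /\ inPar s J (a^-1 * w).
Proof.
have ex_len : exists n, pbool (exists c, inPar s J c /\ len (w * c) = n).
  by exists (len w); apply/pboolP; exists 1; rewrite mulg1; split=> //; apply: inPar1.
case: (ex_minnP ex_len) => n /pboolP [c0 [Jc0 En]] n_min.
exists (w * c0); split; last by rewrite invgM mulgVK; apply: inParV.
move=> c Jc; rewrite En -mulgA; apply: n_min; apply/pboolP.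
by exists (c0 * c); split => //; apply: inParM.
Qed.

Lemma coset_min_inX J a : coset_min J a -> inX s J a.
Proof.
move=> min_a i Ji; have := min_a _ (inPar_s Ji).
by case: (len_mulsR i a) => ->; rewrite ?ltnSn //; lia.
Qed.

Lemma coset_min_eq J a1 a2 c : coset_min J a1 -> coset_min J a2 -> inPar s J c ->
  a2 = a1 * c -> c = 1.
Proof.
move=> min_a1 min_a2 Jc Ea2; apply: len_eq0.
have := len_mul_coset_min min_a1 Jc; have := len_mul_coset_min min_a2 (inParV Jc).
by rewrite -Ea2 Ea2 mulgK lenV; lia.
Qed.

Lemma inX_coset_min J a : inX s J a -> coset_min J a.
Proof.
move=> X_a; case: (coset_min_exists J a) => a0 [min_a0].
have Ea : a = a0 * (a0^-1 * a) by rewrite mulVKg.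
move: (a0^-1 * a) Ea => c Ea J_c; rewrite Ea.
case: (inPar_reduced J_c) => t [tJ Et red_t].
case/lastP: t tJ Et red_t => [|t j] tJ Et red_t; first by rewrite -Et mulg1.
have Jj : j \in J by apply: tJ; rewrite mem_rcons mem_head.
have J_t : inPar s J (wv t).
  by exists t; split=> // i ti; apply: tJ; rewrite mem_rcons inE ti orbT.
have Eaj : a * s j = a0 * wv t by rewrite Ea -Et wval_rcons -!mulgA mulss mulg1.
have := X_a j Jj; rewrite Eaj (len_mul_coset_min min_a0 J_t) Ea.
rewrite (len_mul_coset_min min_a0 J_c) -Et -red_t size_rcons.
by have := len_wval t; lia.
Qed.

Lemma parabolic_decomp_uniq J a1 b1 a2 b2 : inX s J a1 -> inX s J a2 ->
  inPar s J b1 -> inPar s J b2 -> a1 * b1 = a2 * b2 -> b1 = b2.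
Proof.
move=> /inX_coset_min min_a1 /inX_coset_min min_a2 J_b1 J_b2 E.
have J_c : inPar s J (b1 * b2^-1) by apply: inParM => //; apply: inParV.
have Ea2 : a2 = a1 * (b1 * b2^-1) by rewrite mulgA E mulgK.
by move: (coset_min_eq min_a1 min_a2 J_c Ea2) => /eqP; rewrite mulg_eq1 invgK => /eqP.
Qed.

Lemma parcompP J w : exists a, [/\ inX s J a, inPar s J (parcomp s J w) & w = a * parcomp s J w].
Proof.
apply: (@epsilon_spec W (inhabits (1 : W))
  (fun b => exists a, [/\ inX s J a, inPar s J b & w = a * b])).
case: (coset_min_exists J w) => a [min_a J_b]; exists (a^-1 * w), a.
by rewrite mulVKg; split=> //; apply: coset_min_inX.
Qed.

Lemma parcompE J a b : inX s J a -> inPar s J b -> parcomp s J (a * b) = b.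
Proof.
move=> X_a J_b; case: (parcompP J (a * b)) => a' [X_a' J_b' E].
by apply: (parabolic_decomp_uniq X_a' X_a J_b' J_b); rewrite -E.
Qed.

Lemma inX1 J : inX s J 1.
Proof. by move=> i _; rewrite mul1g len1 lens. Qed.

Lemma parcomp_id J w : inPar s J w -> parcomp s J w = w.
Proof. by move=> J_w; rewrite -{1}(mul1g w) parcompE //; apply: inX1. Qed.

Lemma inPar_parcomp J w : inPar s J (parcomp s J w).
Proof. by case: (parcompP J w) => a []. Qed.

Lemma len_parcomp J w : exists a, [/\ inX s J a, w = a * parcomp s J w &
  len w = len a + len (parcomp s J w)].
Proof.
case: (parcompP J w) => a [X_a J_b E]; exists a; split => //.
by rewrite {1}E (len_mul_coset_min (inX_coset_min X_a) J_b).
Qed.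

(* With v = a b and b = c d the two parabolic decompositions, a c is still in X_J since c lies in W_K. *)
Lemma parcomp_parcomp (J K : {set I}) v : J \subset K ->
  parcomp s J (parcomp s K v) = parcomp s J v.
Proof.
move=> JK; case: (parcompP K v) => a [X_a K_b Ev].
move: (parcomp s K v) K_b Ev => b K_b Ev.
case: (parcompP J b) => c [X_c J_d Eb].
move: (parcomp s J b) J_d Eb => d J_d Eb.
have K_c : inPar s K c.
  rewrite -(mulgK d c) -Eb; apply: inParM => //.
  by apply: inParV; apply: inPar_subset J_d.
have X_ac : inX s J (a * c).
  move=> j Jj; have K_cj : inPar s K (c * s j) by apply: inParM K_c (inPar_s (subsetP JK j Jj)).
  rewrite -mulgA !(len_mul_coset_min (inX_coset_min X_a)) //.
  by rewrite ltn_add2l; apply: X_c.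
by rewrite Ev Eb mulgA parcompE.
Qed.

Lemma cox_le_supp u v : cox_le s u v -> supp s u \subset supp s v.
Proof.
rewrite /cox_le => Ev; case: (len_parcomp (supp s u) v) => a [_ Ev' len_v].
by rewrite Ev in Ev' len_v; rewrite Ev' in len_v *; case: (supp_mul_len_add len_v).
Qed.

Lemma cox_le_leftweak u v : cox_le s u v -> leftweak s u v.
Proof.
rewrite /cox_le => Ev; case: (len_parcomp (supp s u) v) => a [_ Ev' len_v].
by rewrite Ev in Ev' len_v; exists a.
Qed.

Lemma cox_le_interval u v : cox_le s u v ->
  forall w, (cox_le s u w /\ cox_le s w v) <->
    (exists J : {set I}, [/\ supp s u \subset J, J \subset supp s v & w = parcomp s J v]).
Proof.
move=> le_uv w; split=> [[le_uw le_wv] | [J [uJ Jv ->]]].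
  by exists (supp s w); split; rewrite ?le_wv //; apply: cox_le_supp.
split; first by rewrite /cox_le parcomp_parcomp.
have wJ : supp s (parcomp s J v) \subset J by apply/inPar_suppE; apply: inPar_parcomp.
by rewrite /cox_le -(parcomp_parcomp v wJ) parcomp_id //; apply: inPar_supp.
Qed.

(* The x a below are the minimal representatives of the cosets of W_{S(u)}, and w >= u iff w = x a * u. *)
Lemma upset_card_index u k : par_index s (supp s u) k -> upset_card s u k.
Proof.
set J := supp s u; case=> r [r_inj r_surj].
pose x a := r a * (parcomp s J (r a))^-1.
have X_x a : inX s J (x a).
  by case: (parcompP J (r a)) => a' [X_a' _ E]; rewrite /x {1}E mulgK.
have Er a : r a = x a * parcomp s J (r a) by rewrite /x mulgVK.
have J_u : inPar s J u by apply: inPar_supp.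
exists (fun a => x a * u); split.
  move=> a b /mulIg Exab; apply: r_inj.
  rewrite (Er a) (Er b) Exab invgM mulgA mulgVK.
  by apply: inParM; [apply: inParV|]; apply: inPar_parcomp.
move=> w; split; last by case=> a <-; rewrite /cox_le -/J; apply: parcompE.
rewrite /cox_le -/J => Ew; case: (parcompP J w) => y [X_y _]; rewrite Ew => {}Ew.
case: (r_surj w) => a J_rw; exists a.
have J_c : inPar s J ((x a)^-1 * y).
  have -> : (x a)^-1 * y = parcomp s J (r a) * ((r a)^-1 * w) * u^-1.
    by rewrite /x Ew invgM invgK !mulgA mulgK.
  by apply: inParM; [apply: inParM => //; apply: inPar_parcomp | apply: inParV].
have c1 : (x a)^-1 * y = 1.
  by rewrite -(parcompE (X_x a) J_c) mulVKg -{1}(mulg1 y) parcompE //; apply: inPar1.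
by rewrite Ew -[y](mulVKg (x a)) c1 mulg1.
Qed.

End Coxeter.

Theorem mainTheorem4 (W : groupType) (I : finType) (s : I -> W)
    (HW : coxeter_system s) (u v : W) :
  [/\ (* (1) *)
      cox_le s u v -> csupp s v \subset csupp s u,
      (* (2) *)
      cox_le s u v ->
        forall w, (cox_le s u w /\ cox_le s w v) <->
          (exists J : {set I},
             [/\ supp s u \subset J, J \subset supp s v & w = parcomp s J v]),
      (* (3) *)
      cox_le s u v -> leftweak s u v
    & (* (4) *)
      forall k : nat, par_index s (supp s u) k -> upset_card s u k].
Proof.
split.
- by move=> le_uv; rewrite /csupp setCS; apply: cox_le_supp le_uv.
- exact: cox_le_interval.
- exact: cox_le_leftweak.
- by move=> k; apply: upset_card_index.
Qed.
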